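(* Let $(X_f,G)$ be a semicocycle extension of the minimal equicontinuous system $(\mathbb{T},G)$ and let $\pi\colon X_f\to\mathbb{T}$ be the associated factor map. Let $\theta\in\mathbb{T}$, $x\in\pi^{-1}(\theta)$, $g\in G$, and $g_1,g_2\in\operatorname{Stab}_G(\theta)$ with $g_1\overset{\theta}{\sim}g_2$. Then $x(gg_1)=x(gg_2)$.
   Context: Setting: $G$ topological group acting jointly continuously, minimally (all orbits dense) and equicontinuously on compact Hausdorff $\mathbb{T}$; $E(\mathbb{T})$ Ellis semigroup. $K$ compact Hausdorff; $f\colon G\theta_0\to K$ continuous with $\overline{G\theta_0}=\mathbb{T}$ (a semicocycle); $F=\overline{\operatorname{gr}f}$, $F(\theta)=\{k:(\theta,k)\in F\}$; $\theta_1\sim\theta_2$ iff $F(\xi\theta_1)=F(\xi\theta_2)$ for all $\xi\in E(\mathbb{T})$; $f$ is assumed invariant under no rotation ($\sim$ is the identity). $X_f$ is the closure in $K^G$ of $\{\sigma^h f: h\in G\}$, where $f$ is identified with $(f(g\theta_0))_{g\in G}$ and $\sigma^h((x_g)_g)=(x_{gh})_g$; write $x(g)=x_g$. The factor map $\pi\colon X_f\to\mathbb{T}$ is defined by: if $(h_n)$ is a net in $G$ with $\sigma^{h_n}f\to x$, then $\pi(x)$ is the (unique) accumulation point of $(h_n\theta_0)$. $\operatorname{Stab}_G(\theta)=\{g\in G:g\theta=\theta\}$; for $g,g'\in\operatorname{Stab}_G(\theta)$, $g\overset{\theta}{\sim}g'$ means there is a neighbourhood $U$ of $\theta$ with $g\omega=g'\omega$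 for all $\omega\in U$. *)

From Stdlib Require Import List Classical.
Import ListNotations.

Set Implicit Arguments.

Record Topology (X : Type) := {
  is_open : (X -> Prop) -> Prop;
  open_full : is_open (fun _ => True);
  open_inter : forall U V, is_open U -> is_open V -> is_open (fun x => U x /\ V x);
  open_union : forall (I : Type) (F : I -> X -> Prop),
      (forall i, is_open (F i)) -> is_open (fun x => exists i, F i x)
}.
Arguments is_open {X} t _.

Definition hausdorff {X} (t : Topology X) : Prop :=
  forall x y, x <> y -> exists U V, is_open t U /\ is_open t V /\ U x /\ V y /\
     (forall z, ~ (U z /\ V z)).

Definition compact {X} (t : Topology X) : Prop :=
  forall (I : Type) (C : I -> X -> Prop), (forall i, is_open t (C i)) ->
    (forall x, exists i, C i x) ->
    exists l : list I, forall x, exists i, In i l /\ C i x.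

Definition prod_open {X Y} (tX : Topology X) (tY : Topology Y) (W : X * Y -> Prop) : Prop :=
  forall p, W p -> exists U V, is_open tX U /\ is_open tY V /\ U (fst p) /\ V (snd p) /\
     (forall q, U (fst q) -> V (snd q) -> W q).

(** Closure in the product topology on [I -> Y] (pointwise/Tychonoff topology):
    [x] is in the closure of [S] iff every basic open neighbourhood
    (finite intersection of subbasic sets [{y | y i \in V}]) of [x] meets [S]. *)
Definition in_prod_closure {I Y} (tY : Topology Y) (S : (I -> Y) -> Prop) (x : I -> Y) : Prop :=
  forall l : list (I * (Y -> Prop)),
    (forall p, In p l -> is_open tY (snd p) /\ snd p (x (fst p))) ->
    exists y, S y /\ forall p, In p l -> snd p (y (fst p)).

Record TopGroup (G : Type) := {
  gmul : G -> G -> G;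
  gone : G;
  ginv : G -> G;
  gmulA : forall a b c, gmul a (gmul b c) = gmul (gmul a b) c;
  gmul1 : forall a, gmul gone a = a;
  gmulV : forall a, gmul (ginv a) a = gone;
  gtop : Topology G;
  gmul_cont : forall W, is_open gtop W -> prod_open gtop gtop (fun p => W (gmul (fst p) (snd p)));
  ginv_cont : forall W, is_open gtop W -> is_open gtop (fun a => W (ginv a))
}.

Record Action {G} (Gs : TopGroup G) {T} (tT : Topology T) := {
  act : G -> T -> T;
  act_one : forall t, act (gone Gs) t = t;
  act_mul : forall g h t, act (gmul Gs g h) t = act g (act h t);
  act_cont : forall W, is_open tT W -> prod_open (gtop Gs) tT (fun p => W (act (fst p) (snd p)))
}.

Section Dyn.
Context {G : Type} (Gs : TopGroup G) {T : Type} (tT : Topology T) (A : Action Gs tT).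

Local Notation act := (act A).

Definition minimal_action : Prop :=
  forall th om U, is_open tT U -> U om -> exists g, U (act g th).

(** equicontinuous (w.r.t. the unique uniformity of the compact Hausdorff space T,
    whose entourages are the neighbourhoods of the diagonal) *)
Definition equicontinuous_action : Prop :=
  forall W, prod_open tT tT W -> (forall t, W (t, t)) ->
    exists D, prod_open tT tT D /\ (forall t, D (t, t)) /\
      forall g x y, D (x, y) -> W (act g x, act g y).

Definition orbit (th0 : T) (t : T) : Prop := exists g, t = act g th0.

Definition dense_orbit (th0 : T) : Prop :=
  forall om U, is_open tT U -> U om -> exists g, U (act g th0).

Definition continuous_on_orbit {K} (tK : Topology K) (th0 : T) (f : T -> K) : Prop :=
  forall th V, orbit th0 th -> is_open tK V -> V (f th) ->
    exists U, is_open tT U /\ U th /\ forall om, orbit th0 om -> U om -> V (f om).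

(** F = closure of the graph of f in T x K;  F(th) = {k | (th,k) \in F}. *)
Definition Fsec {K} (tK : Topology K) (th0 : T) (f : T -> K) (th : T) (k : K) : Prop :=
  forall U V, is_open tT U -> is_open tK V -> U th -> V k ->
    exists g, U (act g th0) /\ V (f (act g th0)).

(** Ellis semigroup E(T): closure of {t |-> g t} in T^T. *)
Definition ellis (xi : T -> T) : Prop :=
  in_prod_closure tT (fun y => exists g, y = act g) xi.

(** f is invariant under no rotation: the relation ~ is the identity. *)
Definition no_rotation_invariance {K} (tK : Topology K) (th0 : T) (f : T -> K) : Prop :=
  forall th1 th2,
    (forall xi, ellis xi -> forall k, Fsec tK th0 f (xi th1) k <-> Fsec tK th0 f (xi th2) k) ->
    th1 = th2.

(** f as the point (f(g th0))_g of K^G, and the shift sigma^h. *)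
Definition fpoint {K} (th0 : T) (f : T -> K) : G -> K := fun g => f (act g th0).
Definition shift {K} (h : G) (x : G -> K) : G -> K := fun g => x (gmul Gs g h).

(** X_f = closure of {sigma^h f | h \in G} in K^G. *)
Definition in_Xf {K} (tK : Topology K) (th0 : T) (f : T -> K) (x : G -> K) : Prop :=
  in_prod_closure tK (fun y => exists h, y = shift h (fpoint th0 f)) x.

Definition directed {D : Type} (le : D -> D -> Prop) : Prop :=
  inhabited D /\ (forall d, le d d) /\ (forall a b c, le a b -> le b c -> le a c) /\
  (forall a b, exists c, le a c /\ le b c).

Definition net_converges {D Y} (tY : Topology Y) (le : D -> D -> Prop) (y : D -> Y) (y0 : Y) :=
  forall U, is_open tY U -> U y0 -> exists d0, forall d, le d0 d -> U (y d).

Definition net_clusters_at {D Y} (tY : Topology Y) (le : D -> D -> Prop) (y : D -> Y) (y0 : Y) :=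
  forall U, is_open tY U -> U y0 -> forall d, exists d', le d d' /\ U (y d').

(** Convergence in K^G (product topology) = convergence of every coordinate. *)
Definition net_converges_prod {D I Y} (tY : Topology Y) (le : D -> D -> Prop)
  (y : D -> I -> Y) (y0 : I -> Y) :=
  forall i, net_converges tY le (fun d => y d i) (y0 i).

(** pi(x) = th: for a net (h_n) with sigma^{h_n} f -> x, th is the cluster
    point of (h_n th0). *)
Definition pi_fiber {K} (tK : Topology K) (th0 : T) (f : T -> K) (x : G -> K) (th : T) : Prop :=
  exists (D : Type) (le : D -> D -> Prop) (h : D -> G),
    directed le /\
    net_converges_prod tK le (fun d => shift (h d) (fpoint th0 f)) x /\
    net_clusters_at tT le (fun d => act (h d) th0) th.

Definition stab (th : T) (g : G) : Prop := act g th = th.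

Definition stab_equiv (th : T) (g g' : G) : Prop :=
  stab th g /\ stab th g' /\
  exists U, is_open tT U /\ U th /\ forall om, U om -> act g om = act g' om.

End Dyn.

(* Let (h_d) be a net with sigma^{h_d} f -> x in K^G and with
   theta a cluster point of (h_d theta0), as provided by pi(x) = theta.
   Evaluating at the coordinates g g1 and g g2, the nets
     d |-> f (g g1 h_d theta0)   and   d |-> f (g g2 h_d theta0)
   converge in K to x(g g1) and x(g g2).  Since g1 and g2 act identically on a
   neighbourhood U of theta and h_d theta0 enters U cofinally often, the two
   nets coincide cofinally often.  In a Hausdorff space two nets that agree
   cofinally often have the same limit, hence x(g g1) = x(g g2). *)

From Stdlib Require Import Classical.

Lemma hausdorff_cofinal_limits_eq {D Y : Type} (tY : Topology Y)
  (le : D -> D -> Prop) (y1 y2 : D -> Y) (l1 l2 : Y) :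
  hausdorff tY -> directed le ->
  net_converges tY le y1 l1 -> net_converges tY le y2 l2 ->
  (forall d, exists d', le d d' /\ y1 d' = y2 d') ->
  l1 = l2.
Proof.
  intros Hhaus [_ [_ [Htrans Hupper]]] Hy1 Hy2 Hcofinal.
  apply NNPP; intro Hne.
  destruct (Hhaus _ _ Hne) as [V1 [V2 [HV1 [HV2 [Hl1 [Hl2 Hdisj]]]]]].
  destruct (Hy1 V1 HV1 Hl1) as [d1 Hd1].
  destruct (Hy2 V2 HV2 Hl2) as [d2 Hd2].
  destruct (Hupper d1 d2) as [d [Hd1d Hd2d]].
  destruct (Hcofinal d) as [d' [Hdd' Heq]].
  apply (Hdisj (y1 d')); split.
  - apply Hd1; exact (Htrans _ _ _ Hd1d Hdd').
  - rewrite Heq; apply Hd2; exact (Htrans _ _ _ Hd2d Hdd').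
Qed.

Lemma shift_fpoint_at_product {G T K : Type} (Gs : TopGroup G) (tT : Topology T)
  (A : Action Gs tT) (th0 : T) (f : T -> K) (h g g' : G) :
  shift Gs h (fpoint A th0 f) (gmul Gs g g') = f (act A g (act A g' (act A h th0))).
Proof.
  unfold shift, fpoint.
  rewrite !act_mul; reflexivity.
Qed.

Lemma stab_equiv_cofinal_agreement {G T K D : Type} {Gs : TopGroup G}
  {tT : Topology T} {A : Action Gs tT} {th0 th : T} (f : T -> K)
  {le : D -> D -> Prop} {h : D -> G} (g : G) {g1 g2 : G} :
  stab_equiv A th g1 g2 ->
  net_clusters_at tT le (fun d => act A (h d) th0) th ->
  forall d, exists d', le d d' /\
    shift Gs (h d') (fpoint A th0 f) (gmul Gs g g1) =
    shift Gs (h d') (fpoint A th0 f) (gmul Gs g g2).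
Proof.
  intros [_ [_ [U [HU [HUth Hagree]]]]] Hcluster d.
  destruct (Hcluster U HU HUth d) as [d' [Hdd' HUd']].
  exists d'; split; [exact Hdd' |].
  rewrite !shift_fpoint_at_product, (Hagree _ HUd'); reflexivity.
Qed.

Theorem mainTheorem8
  (G : Type) (Gs : TopGroup G)
  (T : Type) (tT : Topology T) (A : Action Gs tT)
  (HTc : compact tT) (HTh : hausdorff tT)
  (Hmin : minimal_action A) (Heq : equicontinuous_action A)
  (K : Type) (tK : Topology K) (HKc : compact tK) (HKh : hausdorff tK)
  (th0 : T) (f : T -> K)
  (Hfc : continuous_on_orbit A tK th0 f) (Hdense : dense_orbit A th0)
  (Hnorot : no_rotation_invariance A tK th0 f)
  (th : T) (x : G -> K) (HxX : in_Xf A tK th0 f x) (Hx : pi_fiber A tK th0 f x th)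
  (g g1 g2 : G) (Hg : stab_equiv A th g1 g2) :
  x (gmul Gs g g1) = x (gmul Gs g g2).
Proof.
  destruct Hx as [D [le [h [Hdir [Hconv Hcluster]]]]].
  apply (hausdorff_cofinal_limits_eq tK le
           (fun d => shift Gs (h d) (fpoint A th0 f) (gmul Gs g g1))
           (fun d => shift Gs (h d) (fpoint A th0 f) (gmul Gs g g2))).
  - exact HKh.
  - exact Hdir.
  - apply Hconv.
  - apply Hconv.
  - exact (stab_equiv_cofinal_agreement f g Hg Hcluster).
Qed.
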